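(* Let $d\ge1$, $D=\{1,\dots,d\}$, let $\Pi=(\Pi_{ij})_{i,j\in D}$ be a $d\times d$ stochastic matrix, and let $\mathcal{E}_H:\mathcal{M}_d\otimes\mathcal{M}_d\to\mathcal{M}_d$ be the linear extension of $\mathcal{E}_H(a\otimes b)=a\diamond P_H(b)$. Let $n\in\mathbb{N}$, $r\ge 0$ and $a_m=(a^{(m)}_{kl})_{k,l\in D}\in\mathcal{M}_d$ for $n\le m\le n+r$. Then $$\mathcal{E}_H\big(a_n\otimes\mathcal{E}_H(a_{n+1}\otimes\cdots\otimes\mathcal{E}_H(a_{n+r}\otimes \mathbf{1}_d)\cdots)\big)$$ $$=\sum_{\substack{k_n,\dots,k_{n+r}\in D\\ l_n,\dots,l_{n+r}\in D}}\Big(\prod_{m=n}^{n+r-1}\sqrt{\Pi_{k_mk_{m+1}}\Pi_{l_ml_{m+1}}}\,a^{(m)}_{k_ml_m}\Big)\Big(a^{(n+r)}_{k_{n+r}l_{n+r}}\sum_{j\in D}\sqrt{\Pi_{k_{n+r}j}\Pi_{l_{n+r}j}}\Big)e_{k_nl_n}.$$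
   Context: $\mathcal{M}_d$ is the algebra of complex $d\times d$ matrices with identity $\mathbf{1}_d$ and matrix units $e_{ij}$. A stochastic matrix has nonnegative entries and row sums $1$. $P_H:\mathcal{M}_d\to\mathcal{M}_d$ is defined by $P_H(A)=\sum_{i,j,k,l\in D}\sqrt{\Pi_{ik}\Pi_{jl}}\,a_{kl}\,e_{ij}$ for $A=(a_{kl})$, and $\diamond$ denotes the Schur (entrywise) product of matrices. *)

From HB Require Import structures.
From mathcomp Require Import all_boot all_order all_algebra.
From mathcomp Require Import complex.
Set Implicit Arguments. Unset Strict Implicit. Unset Printing Implicit Defensive.
Import Order.TTheory GRing.Theory Num.Theory.
Local Open Scope ring_scope.
Local Open Scope complex_scope.

Definition stochastic (R : rcfType) (d : nat) (Pi : 'M[R]_d) : Prop :=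
  (forall i j, 0 <= Pi i j) /\ (forall i, \sum_(j < d) Pi i j = 1).

Definition schur (C : pzRingType) (d : nat) (A B : 'M[C]_d) : 'M[C]_d :=
  \matrix_(i, j) (A i j * B i j).

Definition PH (R : rcfType) (d : nat) (Pi : 'M[R]_d) (A : 'M[R[i]]_d)
  : 'M[R[i]]_d :=
  \matrix_(i, j) \sum_(k < d) \sum_(l < d)
     (Num.sqrt (Pi i k * Pi j l))%:C * A k l.

(* E_H on elementary tensors: E_H(a (x) b) = a <> P_H(b);
   E_H is the linear extension of this bilinear map. *)
Definition EH (R : rcfType) (d : nat) (Pi : 'M[R]_d) (a b : 'M[R[i]]_d)
  : 'M[R[i]]_d := schur a (PH Pi b).

Definition nestedEH (R : rcfType) (d : nat) (Pi : 'M[R]_d)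
  (a : nat -> 'M[R[i]]_d) (n r : nat) : 'M[R[i]]_d :=
  foldr (fun m acc => EH Pi (a m) acc) 1%:M (iota n r.+1).

From HB Require Import structures.
From mathcomp Require Import all_boot all_order all_algebra.
From mathcomp Require Import complex.
Import Order.TTheory GRing.Theory Num.Theory.
Local Open Scope ring_scope.
Local Open Scope complex_scope.
Set Implicit Arguments. Unset Strict Implicit.

(* Entrywise, E_H(A (x) B)_{xy} = A_{xy} sum_{k,l} sqrt(Pi_{xk} Pi_{yl}) B_{kl}: one application
   of E_H prepends one step (x, y) -> (k, l) to a pair of index paths.  Unfolding the nesting
   therefore sums, over all pairs of paths (k, l) of length r + 1 starting at (x, y), the
   product of the step weights and of the entries of the a_m along the paths, the final
   factor sum_j sqrt(Pi_{k_{n+r} j} Pi_{l_{n+r} j}) coming from P_H(1). *)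

Section FfunCons.

Variables (T : finType) (m : nat).

Definition ffun_cons (x : T) (K : {ffun 'I_m -> T}) : {ffun 'I_m.+1 -> T} :=
  [ffun p => if unlift ord0 p is Some q then K q else x].

Definition ffun_behead (k : {ffun 'I_m.+1 -> T}) : {ffun 'I_m -> T} :=
  [ffun q => k (lift ord0 q)].

Lemma ffun_cons0 x K : ffun_cons x K ord0 = x.
Proof. by rewrite ffunE unlift_none. Qed.

Lemma ffun_consS x K q : ffun_cons x K (lift ord0 q) = K q.
Proof. by rewrite ffunE liftK. Qed.

Lemma ffun_consK x : cancel (ffun_cons x) ffun_behead.
Proof. by move=> K; apply/ffunP => q; rewrite ffunE ffun_consS. Qed.

Lemma ffun_beheadK (k : {ffun 'I_m.+1 -> T}) : ffun_cons (k ord0) (ffun_behead k) = k.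
Proof.
apply/ffunP => p; rewrite ffunE.
by case: (unliftP ord0 p) => [q ->|->] //; rewrite ffunE.
Qed.

Lemma big_ffun_cons_head (V : nmodType) x (F : {ffun 'I_m.+1 -> T} -> V) :
  \sum_(k : {ffun 'I_m.+1 -> T} | k ord0 == x) F k = \sum_K F (ffun_cons x K).
Proof.
rewrite (reindex_onto (ffun_cons x) ffun_behead) => [|k /eqP <-].
  by apply: eq_bigl => K; rewrite ffun_cons0 ffun_consK !eqxx.
exact: ffun_beheadK.
Qed.

Lemma big_ffun_cons (V : nmodType) (F : {ffun 'I_m.+1 -> T} -> V) :
  \sum_k F k = \sum_x \sum_K F (ffun_cons x K).
Proof.
rewrite (partition_big (fun k : {ffun 'I_m.+1 -> T} => k ord0) xpredT) //=.
by apply: eq_bigr => x _; rewrite big_ffun_cons_head.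
Qed.

End FfunCons.

Lemma big_ffun_ord0 (T : finType) (V : nmodType) (v : V) :
  \sum_(K : {ffun 'I_0 -> T}) v = v.
Proof. by rewrite sumr_const card_ffun card_ord expn0. Qed.

Lemma sum_scale_delta_mxE (C : pzRingType) (I J : finType) (m n : nat)
    (f : I -> 'I_m) (g : J -> 'I_n) (w : I -> J -> C) x y :
  (\sum_i \sum_j w i j *: delta_mx (f i) (g j)) x y =
  \sum_(i | f i == x) \sum_(j | g j == y) w i j.
Proof.
rewrite summxE [RHS]big_mkcond; apply: eq_bigr => i _.
rewrite summxE; case: eqP => [<-|/eqP fi_neq].
  rewrite [RHS]big_mkcond; apply: eq_bigr => j _.
  by rewrite !mxE eqxx eq_sym; case: (g j == y); rewrite ?mulr1 ?mulr0.
by rewrite big1 // => j _; rewrite !mxE eq_sym (negbTE fi_neq) mulr0.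
Qed.

Section NestedEH.

Variables (R : rcfType) (d : nat) (Pi : 'M[R]_d) (a : nat -> 'M[R[i]]_d).

Local Notation step x y k l := (Num.sqrt (Pi x k * Pi y l))%:C.

Lemma EH_mxE A B x y : EH Pi A B x y = A x y * PH Pi B x y.
Proof. by rewrite mxE. Qed.

Lemma PH1_mxE x y : PH Pi 1%:M x y = \sum_j step x y j j.
Proof.
rewrite mxE; apply: eq_bigr => k _.
rewrite (bigD1 k) //= big1 => [|l /negPf lk]; last by rewrite mxE eq_sym lk mulr0.
by rewrite mxE eqxx mulr1 addr0.
Qed.

Lemma nestedEH0 n : nestedEH Pi a n 0 = EH Pi (a n) 1%:M.
Proof. by []. Qed.

Lemma nestedEHS n r : nestedEH Pi a n r.+1 = EH Pi (a n) (nestedEH Pi a n.+1 r).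
Proof. by []. Qed.

Definition path_weight n r (k l : {ffun 'I_r.+1 -> 'I_d}) : R[i] :=
  (\prod_(p < r)
     (step (k (widen_ord (leqnSn r) p)) (l (widen_ord (leqnSn r) p))
           (k (lift ord0 p)) (l (lift ord0 p))
      * a (n + p)%N (k (widen_ord (leqnSn r) p)) (l (widen_ord (leqnSn r) p))))
  * (a (n + r)%N (k ord_max) (l ord_max)
     * \sum_(j < d) step (k ord_max) (l ord_max) j j).

Arguments path_weight n r k l : clear implicits.

Lemma path_weight0 n (k l : {ffun 'I_1 -> 'I_d}) :
  path_weight n 0 k l =
  a n (k ord0) (l ord0) * \sum_j step (k ord0) (l ord0) j j.
Proof.
rewrite /path_weight big_ord0 mul1r addn0.
by have -> : (ord_max : 'I_1) = ord0 by apply: val_inj.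
Qed.

Lemma path_weight_cons n r x y (K L : {ffun 'I_r.+1 -> 'I_d}) :
  path_weight n r.+1 (ffun_cons x K) (ffun_cons y L) =
  a n x y * (step x y (K ord0) (L ord0) * path_weight n.+1 r K L).
Proof.
have widen0 : widen_ord (leqnSn r.+1) ord0 = ord0 by apply: val_inj.
have widen_lift p : widen_ord (leqnSn r.+1) (lift ord0 p)
                    = lift ord0 (widen_ord (leqnSn r) p) by apply: val_inj.
have max_lift : (ord_max : 'I_r.+2) = lift ord0 ord_max by apply: val_inj.
rewrite /path_weight big_ord_recl widen0 !ffun_cons0 !ffun_consS addn0.
under eq_bigr => p _ do rewrite widen_lift !ffun_consS addnS -addSn.
by rewrite max_lift !ffun_consS addnS -addSn [X in X * _ * _]mulrC -!mulrA.
Qed.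

Lemma nestedEH_mxE n r x y :
  nestedEH Pi a n r x y =
  \sum_K \sum_L path_weight n r (ffun_cons x K) (ffun_cons y L).
Proof.
elim: r n x y => [|r IHr] n x y.
  rewrite nestedEH0 EH_mxE PH1_mxE; symmetry.
  under eq_bigr do under eq_bigr do rewrite path_weight0 !ffun_cons0.
  by rewrite !big_ffun_ord0.
rewrite nestedEHS EH_mxE mxE; symmetry.
under eq_bigr do under eq_bigr do rewrite path_weight_cons.
under eq_bigr do rewrite -big_distrr /=.
rewrite -big_distrr /=; congr (_ * _).
rewrite [LHS]big_ffun_cons; apply: eq_bigr => k _.
under [LHS]eq_bigr do rewrite big_ffun_cons.
rewrite exchange_big; apply: eq_bigr => l _.
rewrite IHr big_distrr; apply: eq_bigr => K _.
by rewrite big_distrr; apply: eq_bigr => L _; rewrite !ffun_cons0.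
Qed.

End NestedEH.

Arguments path_weight {R d} Pi a n r k l.

Theorem mainTheorem2 (R : rcfType) (d : nat) (hd : (0 < d)%N)
  (Pi : 'M[R]_d) (hPi : stochastic Pi)
  (n r : nat) (a : nat -> 'M[R[i]]_d) :
  nestedEH Pi a n r =
  \sum_(k : {ffun 'I_r.+1 -> 'I_d}) \sum_(l : {ffun 'I_r.+1 -> 'I_d})
    ((\prod_(i < r)
        ((Num.sqrt (Pi (k (widen_ord (leqnSn r) i)) (k (lift ord0 i))
                  * Pi (l (widen_ord (leqnSn r) i)) (l (lift ord0 i))))%:C
         * a (n + i)%N (k (widen_ord (leqnSn r) i)) (l (widen_ord (leqnSn r) i))))
     * (a (n + r)%N (k ord_max) (l ord_max)
        * \sum_(j < d) (Num.sqrt (Pi (k ord_max) j * Pi (l ord_max) j))%:C))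
    *: delta_mx (k ord0) (l ord0).
Proof.
apply/matrixP => x y.
rewrite (sum_scale_delta_mxE (fun k : {ffun 'I_r.+1 -> 'I_d} => k ord0)
          (fun l : {ffun 'I_r.+1 -> 'I_d} => l ord0) (path_weight Pi a n r)).
rewrite nestedEH_mxE big_ffun_cons_head; apply: eq_bigr => K _.
by rewrite big_ffun_cons_head.
Qed.
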